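(* Let $\nu\in\mathbb{C}$ and $\mathrm{Re}(x)<\mathrm{Re}(\nu)$. Let $U$ be a Hankel-type contour in the $t$-plane that starts at $+\infty$ above the real axis, circles the origin counterclockwise, and returns to $+\infty$ below the real axis, such that $t^{-\nu}\big[\frac12(t-\frac1t)+1\big]^x$ vanishes at the endpoints of $U$. Define \[ y_\nu(x)=\int_U t^{-\nu-1}\Big[\frac12\Big(t-\frac1t\Big)+1\Big]^x\,dt . \] Then (i) $y_\nu$ satisfies the delay-difference equations \[ x\,\Delta y_\nu(x-1)+\nu y_\nu(x)-x\,y_{\nu-1}(x-1)=0,\qquad x\,\Delta y_\nu(x-1)-\nu y_\nu(x)+x\,y_{\nu+1}(x-1)=0; \] (ii) $y_\nu$ solves the difference Bessel equation of order $\nu$: \[ x(x-1)\Delta^2y(x-2)+x\Delta y(x-1)+x(x-1)y(x-2)-\nu^2y(x)=0 . \]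
   Context: $\Delta$ is the forward difference operator: $\Delta g(x)=g(x+1)-g(x)$, so $\Delta g(x-1)=g(x)-g(x-1)$ and $\Delta^2g=\Delta(\Delta g)$. *)

From Stdlib Require Import Reals.
From Coquelicot Require Import Coquelicot.

Open Scope C_scope.

Definition cexp (z : C) : C :=
  (exp (Re z) * cos (Im z), exp (Re z) * sin (Im z))%R.

Definition cint (f : R -> C) : C :=
  (RInt_gen (fun s => Re (f s)) (Rbar_locally m_infty) (Rbar_locally p_infty),
   RInt_gen (fun s => Im (f s)) (Rbar_locally m_infty) (Rbar_locally p_infty)).

Definition ex_cint (f : R -> C) : Prop :=
  ex_RInt_gen (fun s => Re (f s)) (Rbar_locally m_infty) (Rbar_locally p_infty) /\
  ex_RInt_gen (fun s => Im (f s)) (Rbar_locally m_infty) (Rbar_locally p_infty).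

(* The contour U is parametrized by gamma : R -> C with derivative dgamma.
   L1 s is a continuous logarithm of t = gamma s along U, so t^a := cexp (a * L1 s);
   L2 s is a continuous logarithm of (1/2)(t - 1/t) + 1 along U,
   so [(1/2)(t - 1/t) + 1]^x := cexp (x * L2 s). *)
Definition hankel_integrand (dgamma L1 L2 : R -> C) (nu x : C) (s : R) : C :=
  cexp ((- nu - 1) * L1 s) * cexp (x * L2 s) * dgamma s.

Definition hankel_y (dgamma L1 L2 : R -> C) (nu x : C) : C :=
  cint (hankel_integrand dgamma L1 L2 nu x).

Definition fwd_diff (g : C -> C) (z : C) : C := g (z + 1) - g z.

From Stdlib Require Import Reals Lra.
From Coquelicot Require Import Coquelicot.
Open Scope C_scope.

(* Write w(t) = (t - 1/t)/2 + 1 and y_a(b) for the integral of t^(-a-1) w^b over U.  Writing w^b = w^(b-1) (1 + (t - 1/t)/2)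
   in the integrand gives y_a(b) = y_a(b-1) + (y_(a-1)(b-1) - y_(a+1)(b-1))/2.  Since
   d/dt (t^(-a) w^b) = -a t^(-a-1) w^b + (b/2) (t^(-a) + t^(-a-2)) w^(b-1) and t^(-a) w^b
   vanishes at both ends of U, integration by parts gives
   a y_a(b) = (b/2) (y_(a-1)(b-1) + y_(a+1)(b-1)).  Combining the two relations gives
   the delay-difference equations (i); the Bessel equation (ii) is a linear
   combination of (i) at (nu, x), (nu, x-1) and (nu+1, x-1).  The vanishing at the shifted
   parameters follows from the vanishing at (nu, x), because 1/w and 1/t are bounded by 1
   where Re t >= 1.  Powers are cexp (c L) for the given continuous logarithms L; a continuous
   branch L of log g is differentiable with L' = g'/g. *)

Lemma C_ext (a b : C) : Re a = Re b -> Im a = Im b -> a = b.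
Proof. destruct a, b; simpl; intros -> ->; reflexivity. Qed.

Lemma cexp_norm2 (z : C) :
  (Re (cexp z) ^ 2 + Im (cexp z) ^ 2 = exp (Re z) * exp (Re z))%R.
Proof.
  unfold cexp; simpl. pose proof (sin2_cos2 (Im z)) as E. unfold Rsqr in E.
  transitivity (exp (Re z) * exp (Re z) * (sin (Im z) * sin (Im z) + cos (Im z) * cos (Im z)))%R;
    [ring | rewrite E; ring].
Qed.

Lemma cexp_neq0 (z : C) : cexp z <> 0.
Proof.
  intro E. pose proof (cexp_norm2 z) as N. pose proof (exp_pos (Re z)).
  rewrite E in N. simpl in N. nra.
Qed.

Lemma cexp_plus (a b : C) : cexp (a + b) = cexp a * cexp b.
Proof.
  destruct a as [a1 a2], b as [b1 b2]; unfold cexp; simpl.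
  rewrite exp_plus, cos_plus, sin_plus. apply C_ext; simpl; ring.
Qed.

Lemma cexp_0 : cexp 0 = 1.
Proof. unfold cexp; simpl. rewrite exp_0, cos_0, sin_0. apply C_ext; simpl; ring. Qed.

Lemma cexp_mult_split (c d e z : C) :
  c = d + e -> cexp (c * z) = cexp (d * z) * cexp (e * z).
Proof. intros ->. rewrite <- cexp_plus. f_equal. ring. Qed.

Lemma cexp_mult_1 (z : C) : cexp (1 * z) = cexp z.
Proof. f_equal. ring. Qed.

Lemma cexp_mult_m1 (z : C) : cexp (-1 * z) = / cexp z.
Proof.
  assert (E : cexp z * cexp (-1 * z) = 1).
  { rewrite <- cexp_plus, <- cexp_0. f_equal. ring. }
  pose proof (cexp_neq0 z). field_simplify_eq; auto. rewrite <- E. ring.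
Qed.

Lemma is_derive_Rmult (p q : R -> R) (s dp dq : R) :
  is_derive p s dp -> is_derive q s dq ->
  is_derive (fun u => p u * q u)%R s (dp * q s + p s * dq)%R.
Proof. intros Hp Hq. exact (is_derive_mult p q s dp dq Hp Hq Rmult_comm). Qed.

Definition is_derive_RC (f : R -> C) (s : R) (l : C) : Prop :=
  is_derive (fun u => Re (f u)) s (Re l) /\ is_derive (fun u => Im (f u)) s (Im l).

Lemma is_derive_RC_eq (f : R -> C) (s : R) (a l : C) :
  is_derive_RC f s a -> a = l -> is_derive_RC f s l.
Proof. now intros H <-. Qed.

Lemma is_derive_RC_ext (f g : R -> C) (s : R) (a : C) :
  (forall u, f u = g u) -> is_derive_RC f s a -> is_derive_RC g s a.
Proof.
  intros E [H1 H2]; split;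
    [apply (is_derive_ext (fun u => Re (f u))) | apply (is_derive_ext (fun u => Im (f u)))];
    auto; intro u; now rewrite E.
Qed.

Lemma is_derive_RC_const (c : C) (s : R) : is_derive_RC (fun _ => c) s 0.
Proof. split; exact (is_derive_const (K := R_AbsRing) (V := R_NormedModule) _ s). Qed.

Lemma is_derive_RC_plus (f g : R -> C) (s : R) (a b : C) :
  is_derive_RC f s a -> is_derive_RC g s b -> is_derive_RC (fun u => f u + g u) s (a + b).
Proof.
  intros [Hf1 Hf2] [Hg1 Hg2].
  split; [exact (is_derive_plus _ _ _ _ _ Hf1 Hg1) | exact (is_derive_plus _ _ _ _ _ Hf2 Hg2)].
Qed.

Lemma is_derive_RC_minus (f g : R -> C) (s : R) (a b : C) :
  is_derive_RC f s a -> is_derive_RC g s b -> is_derive_RC (fun u => f u - g u) s (a - b).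
Proof.
  intros [Hf1 Hf2] [Hg1 Hg2].
  split; [exact (is_derive_minus _ _ _ _ _ Hf1 Hg1) | exact (is_derive_minus _ _ _ _ _ Hf2 Hg2)].
Qed.

Lemma is_derive_RC_mult (f g : R -> C) (s : R) (a b : C) :
  is_derive_RC f s a -> is_derive_RC g s b ->
  is_derive_RC (fun u => f u * g u) s (a * g s + f s * b).
Proof.
  intros [Hf1 Hf2] [Hg1 Hg2]; split.
  - replace (Re (a * g s + f s * b))
      with ((Re a * Re (g s) + Re (f s) * Re b) - (Im a * Im (g s) + Im (f s) * Im b))%R
      by (unfold Re, Im; simpl; ring).
    exact (is_derive_minus _ _ _ _ _ (is_derive_Rmult _ _ _ _ _ Hf1 Hg1)
                                     (is_derive_Rmult _ _ _ _ _ Hf2 Hg2)).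
  - replace (Im (a * g s + f s * b))
      with ((Re a * Im (g s) + Re (f s) * Im b) + (Im a * Re (g s) + Im (f s) * Re b))%R
      by (unfold Re, Im; simpl; ring).
    exact (is_derive_plus _ _ _ _ _ (is_derive_Rmult _ _ _ _ _ Hf1 Hg2)
                                    (is_derive_Rmult _ _ _ _ _ Hf2 Hg1)).
Qed.

Lemma is_derive_RC_scal (c : C) (f : R -> C) (s : R) (a : C) :
  is_derive_RC f s a -> is_derive_RC (fun u => c * f u) s (c * a).
Proof.
  intro H. eapply is_derive_RC_eq.
  - exact (is_derive_RC_mult (fun _ => c) f s 0 a (is_derive_RC_const c s) H).
  - cbv beta; ring.
Qed.

Lemma is_derive_RC_cexp (f : R -> C) (s : R) (a : C) :
  is_derive_RC f s a -> is_derive_RC (fun u => cexp (f u)) s (cexp (f s) * a).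
Proof.
  intros [H1 H2].
  assert (Hexp := is_derive_comp exp _ s _ _ (is_derive_exp (Re (f s))) H1).
  assert (Hcos := is_derive_comp cos _ s _ _ (is_derive_cos (Im (f s))) H2).
  assert (Hsin := is_derive_comp sin _ s _ _ (is_derive_sin (Im (f s))) H2).
  split.
  - replace (Re (cexp (f s) * a)) with
      (Re a * exp (Re (f s)) * cos (Im (f s)) + exp (Re (f s)) * (Im a * - sin (Im (f s))))%R
      by (unfold cexp, Re, Im; simpl; ring).
    exact (is_derive_Rmult _ _ _ _ _ Hexp Hcos).
  - replace (Im (cexp (f s) * a)) with
      (Re a * exp (Re (f s)) * sin (Im (f s)) + exp (Re (f s)) * (Im a * cos (Im (f s))))%R
      by (unfold cexp, Re, Im; simpl; ring).
    exact (is_derive_Rmult _ _ _ _ _ Hexp Hsin).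
Qed.

Lemma is_derive_Re_log (g L : R -> C) (s : R) (d : C) :
  (forall u, cexp (L u) = g u) -> is_derive_RC g s d ->
  is_derive (fun u => Re (L u)) s (Re (d / g s)).
Proof.
  intros HL [Hd1 Hd2].
  set (N := fun u => (Re (g u) ^ 2 + Im (g u) ^ 2)%R).
  assert (HN : forall u, N u = (exp (Re (L u)) * exp (Re (L u)))%R).
  { intro u. unfold N. rewrite <- HL. apply cexp_norm2. }
  assert (HNs : (0 < N s)%R) by (rewrite HN; pose proof (exp_pos (Re (L s))); nra).
  apply (is_derive_ext (fun u => / 2 * ln (N u))%R).
  { intro u. simpl. rewrite HN, <- exp_plus, ln_exp. field. }
  assert (HdN := is_derive_plus _ _ _ _ _ (is_derive_pow _ 2 _ _ Hd1)
                                          (is_derive_pow _ 2 _ _ Hd2)).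
  assert (Hln := is_derive_comp ln N s _ _ (is_derive_ln _ HNs) HdN).
  replace (Re (d / g s))
    with (/ 2 * ((INR 2 * Re d * Re (g s) ^ 1 + INR 2 * Im d * Im (g s) ^ 1) * / N s))%R.
  - exact (is_derive_scal _ _ _ _ Hln).
  - unfold N in *. destruct d as [d1 d2], (g s) as [p q]. unfold Re, Im in *; simpl in *.
    field. lra.
Qed.

Lemma is_derive_asin_0 : is_derive asin 0%R 1%R.
Proof.
  assert (H : (-1 < 0 < 1)%R) by lra.
  apply is_derive_Reals, (derive_pt_eq_1 _ _ _ (derivable_pt_asin 0 H)).
  rewrite derive_pt_asin, Rsqr_0, Rminus_0_r, sqrt_1. field.
Qed.

Lemma is_derive_Im_log (g L : R -> C) (s : R) (d : C) :
  (forall u, cexp (L u) = g u) -> continuous L s -> is_derive_RC g s d ->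
  is_derive (fun u => Im (L u)) s (Im (d / g s)).
Proof.
  intros HL Hc Hd.
  assert (HRe := is_derive_Re_log g L s d HL Hd). destruct Hd as [Hd1 Hd2].
  set (th0 := Im (L s)).
  (* Near [s], [Im (L u) = th0 + asin (phi u)], where [phi u = sin (Im (L u) - th0)] is a
     differentiable expression in [g u] and [Re (L u)]. *)
  set (phi := fun u => ((cos th0 * Im (g u) - sin th0 * Re (g u)) * exp (- Re (L u)))%R).
  assert (Hphi : forall u, phi u = sin (Im (L u) - th0)).
  { intro u. unfold phi. rewrite <- HL. unfold cexp; simpl. rewrite sin_minus, exp_Ropp.
    field. apply Rgt_not_eq, exp_pos. }
  apply (is_derive_ext_loc (fun u => th0 + asin (phi u))%R).
  { assert (Hloc : locally s (fun u => ball th0 (PI / 2) (Im (L u)))).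
    { apply (continuous_comp L snd s Hc).
      - destruct (L s). apply continuous_snd.
      - apply (locally_ball th0 (mkposreal _ PI2_RGT_0)). }
    revert Hloc; apply filter_imp; intros u Hu.
    change (Rabs (Im (L u) - th0) < PI / 2)%R in Hu. apply Rabs_def2 in Hu.
    change (th0 + asin (phi u) = Im (L u))%R. rewrite Hphi, asin_sin by lra. ring. }
  assert (Hphi0 : phi s = 0%R) by (rewrite Hphi; unfold th0; rewrite Rminus_diag; apply sin_0).
  assert (HA := is_derive_minus _ _ _ _ _ (is_derive_scal _ _ (cos th0) _ Hd2)
                                          (is_derive_scal _ _ (sin th0) _ Hd1)).
  assert (HE := is_derive_comp exp _ s _ _ (is_derive_exp _) (is_derive_opp _ _ _ HRe)).
  assert (Hdphi := is_derive_Rmult _ _ _ _ _ HA HE).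
  assert (Hasin := is_derive_comp asin phi s _ _
                     ltac:(rewrite Hphi0; exact is_derive_asin_0) Hdphi).
  assert (Hsum := is_derive_plus _ _ s _ _
                    (is_derive_const (K := R_AbsRing) (V := R_NormedModule) th0 s) Hasin).
  replace (Im (d / g s)) with (0 + ((cos th0 * Im d - sin th0 * Re d) * exp (- Re (L s))
     + (cos th0 * Im (g s) - sin th0 * Re (g s)) * (- Re (d / g s) * exp (- Re (L s)))) * 1)%R.
  { exact Hsum. }
  assert (HA0 : (cos th0 * Im (g s) - sin th0 * Re (g s) = 0)%R).
  { pose proof (exp_pos (- Re (L s))). unfold phi in Hphi0. nra. }
  rewrite HA0. unfold th0. rewrite <- (HL s). destruct d as [d1 d2], (L s) as [r t].
  pose proof (exp_pos r). pose proof (sin2_cos2 t) as E. unfold Rsqr in E.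
  unfold cexp, Re, Im, Cdiv, Cmult, Cinv; simpl. rewrite exp_Ropp.
  replace (exp r * cos t * (exp r * cos t * 1) + exp r * sin t * (exp r * sin t * 1))%R
    with (exp r * exp r)%R
    by (transitivity (exp r * exp r * (sin t * sin t + cos t * cos t))%R; [rewrite E | ]; ring).
  field. lra.
Qed.

Lemma is_derive_RC_log (g L : R -> C) (s : R) (d : C) :
  (forall u, cexp (L u) = g u) -> continuous L s -> is_derive_RC g s d ->
  is_derive_RC L s (d / g s).
Proof. intros HL Hc Hd. split; [apply is_derive_Re_log | apply is_derive_Im_log]; auto. Qed.

Lemma continuous_Re (f : R -> C) (s : R) : continuous f s -> continuous (fun u => Re (f u)) s.
Proof. intro H. apply (continuous_comp f fst s H). destruct (f s). apply continuous_fst. Qed.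

Lemma continuous_Im (f : R -> C) (s : R) : continuous f s -> continuous (fun u => Im (f u)) s.
Proof. intro H. apply (continuous_comp f snd s H). destruct (f s). apply continuous_snd. Qed.

Lemma continuous_C_intro (f : R -> C) (s : R) :
  continuous (fun u => Re (f u)) s -> continuous (fun u => Im (f u)) s -> continuous f s.
Proof.
  intros H1 H2. apply filterlim_locally. intro eps.
  exact (filter_and _ _ (proj1 (filterlim_locally _ _) H1 eps)
                        (proj1 (filterlim_locally _ _) H2 eps)).
Qed.

Lemma is_derive_RC_continuous (f : R -> C) (s : R) (l : C) :
  is_derive_RC f s l -> continuous f s.
Proof.
  intros [H1 H2].
  apply continuous_C_intro; apply (ex_derive_continuous (K := R_AbsRing) (V := R_NormedModule));
    eexists; eassumption.
Qed.

Lemma continuous_Cmult (f g : R -> C) (s : R) :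
  continuous f s -> continuous g s -> continuous (fun u => f u * g u) s.
Proof.
  intros Hf Hg.
  assert (Hf1 := continuous_Re f s Hf). assert (Hf2 := continuous_Im f s Hf).
  assert (Hg1 := continuous_Re g s Hg). assert (Hg2 := continuous_Im g s Hg).
  apply continuous_C_intro.
  - exact (continuous_minus _ _ _ (continuous_mult _ _ _ Hf1 Hg1)
                                   (continuous_mult _ _ _ Hf2 Hg2)).
  - exact (continuous_plus _ _ _ (continuous_mult _ _ _ Hf1 Hg2)
                                  (continuous_mult _ _ _ Hf2 Hg1)).
Qed.

Lemma continuous_Cplus (f g : R -> C) (s : R) :
  continuous f s -> continuous g s -> continuous (fun u => f u + g u) s.
Proof. exact (continuous_plus (V := C_NormedModule) f g s). Qed.

Lemma is_RInt_gen_derive_vanishing (F f : R -> R) :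
  (forall s, is_derive F s (f s)) -> (forall s, continuous f s) ->
  filterlim F (Rbar_locally m_infty) (locally 0%R) ->
  filterlim F (Rbar_locally p_infty) (locally 0%R) ->
  is_RInt_gen f (Rbar_locally m_infty) (Rbar_locally p_infty) 0%R.
Proof.
  intros Hd Hc Hm Hp.
  assert (E : forall s, Derive F s = f s) by (intro s; apply is_derive_unique, Hd).
  apply (is_RInt_gen_ext (Derive F)).
  { apply filter_forall. intros ab s _. apply E. }
  replace 0%R with (0 - 0)%R by ring.
  apply is_RInt_gen_Derive; auto; apply filter_forall; intros ab s _.
  - eexists; apply Hd.
  - apply (continuous_ext f); [intro; symmetry; apply E | apply Hc].
Qed.

Definition is_cint (f : R -> C) (l : C) : Prop :=
  is_RInt_gen (fun s => Re (f s)) (Rbar_locally m_infty) (Rbar_locally p_infty) (Re l) /\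
  is_RInt_gen (fun s => Im (f s)) (Rbar_locally m_infty) (Rbar_locally p_infty) (Im l).

Lemma cint_correct (f : R -> C) : ex_cint f -> is_cint f (cint f).
Proof. intros [H1 H2]; split; now apply (RInt_gen_correct (V := R_CompleteNormedModule)). Qed.

Lemma is_cint_unique (f : R -> C) (a b : C) : is_cint f a -> is_cint f b -> a = b.
Proof.
  intros [A1 A2] [B1 B2].
  apply (is_RInt_gen_unique (V := R_CompleteNormedModule)) in A1, A2, B1, B2.
  apply C_ext; congruence.
Qed.

Lemma is_cint_ext (f g : R -> C) (l : C) : (forall s, f s = g s) -> is_cint f l -> is_cint g l.
Proof.
  intros E [H1 H2].
  split; eapply is_RInt_gen_ext; try eassumption; apply filter_forall; intros ab s _; now rewrite E.
Qed.

Lemma is_cint_plus (f g : R -> C) (a b : C) :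
  is_cint f a -> is_cint g b -> is_cint (fun s => f s + g s) (a + b).
Proof.
  intros [A1 A2] [B1 B2].
  split; [exact (is_RInt_gen_plus _ _ _ _ A1 B1) | exact (is_RInt_gen_plus _ _ _ _ A2 B2)].
Qed.

Lemma is_cint_minus (f g : R -> C) (a b : C) :
  is_cint f a -> is_cint g b -> is_cint (fun s => f s - g s) (a - b).
Proof.
  intros [A1 A2] [B1 B2].
  split; [exact (is_RInt_gen_minus _ _ _ _ A1 B1) | exact (is_RInt_gen_minus _ _ _ _ A2 B2)].
Qed.

Lemma is_cint_scal (c : C) (f : R -> C) (a : C) :
  is_cint f a -> is_cint (fun s => c * f s) (c * a).
Proof.
  intros [A1 A2]; split.
  - exact (is_RInt_gen_minus _ _ _ _ (is_RInt_gen_scal _ (Re c) _ A1)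
                                     (is_RInt_gen_scal _ (Im c) _ A2)).
  - exact (is_RInt_gen_plus _ _ _ _ (is_RInt_gen_scal _ (Re c) _ A2)
                                    (is_RInt_gen_scal _ (Im c) _ A1)).
Qed.

Lemma filterlim_Re {T : Type} (F : (T -> Prop) -> Prop) {FF : Filter F} (G : T -> C) (l : C) :
  filterlim G F (locally l) -> filterlim (fun s => Re (G s)) F (locally (Re l)).
Proof. intro H. eapply filterlim_comp; [exact H |]. destruct l. apply continuous_fst. Qed.

Lemma filterlim_Im {T : Type} (F : (T -> Prop) -> Prop) {FF : Filter F} (G : T -> C) (l : C) :
  filterlim G F (locally l) -> filterlim (fun s => Im (G s)) F (locally (Im l)).
Proof. intro H. eapply filterlim_comp; [exact H |]. destruct l. apply continuous_snd. Qed.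

Lemma is_cint_derive_vanishing (G g : R -> C) :
  (forall s, is_derive_RC G s (g s)) -> (forall s, continuous g s) ->
  filterlim G (Rbar_locally m_infty) (locally (RtoC 0)) ->
  filterlim G (Rbar_locally p_infty) (locally (RtoC 0)) ->
  is_cint g 0.
Proof.
  intros Hd Hc Hm Hp. split.
  - apply (is_RInt_gen_derive_vanishing (fun s => Re (G s))).
    + intro s. apply Hd.
    + intro s. apply continuous_Re, Hc.
    + exact (filterlim_Re _ G _ Hm).
    + exact (filterlim_Re _ G _ Hp).
  - apply (is_RInt_gen_derive_vanishing (fun s => Im (G s))).
    + intro s. apply Hd.
    + intro s. apply continuous_Im, Hc.
    + exact (filterlim_Im _ G _ Hm).
    + exact (filterlim_Im _ G _ Hp).
Qed.

Lemma filterlim_mult_inv_0 {T : Type} (F : (T -> Prop) -> Prop) {FF : Filter F}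
  (f k : T -> C) :
  filterlim f F (locally (RtoC 0)) -> F (fun s => 1 <= Re (k s))%R ->
  filterlim (fun s => f s * / k s) F (locally (RtoC 0)).
Proof.
  intros Hf Hk.
  apply (filterlim_locally_ball_norm (K := C_AbsRing) (U := C_NormedModule)). intro eps.
  generalize (filter_and _ _
    (proj1 (filterlim_locally_ball_norm (K := C_AbsRing) (U := C_NormedModule) _ _) Hf eps) Hk).
  apply filter_imp. intros s [Hs Hks]. unfold ball_norm in *.
  change (Cmod (f s * / k s - 0) < eps)%R. change (Cmod (f s - 0) < eps)%R in Hs.
  assert (Hmod : (1 <= Cmod (k s))%R)
    by (eapply Rle_trans; [exact Hks | eapply Rle_trans; [apply Rle_abs | apply re_le_Cmod]]).
  assert (Hk0 : k s <> 0) by (intro E; rewrite E, Cmod_0 in Hmod; lra).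
  replace (f s * / k s - 0) with (f s * / k s) by ring.
  replace (f s - 0) with (f s) in Hs by ring.
  rewrite Cmod_mult, Cmod_inv by exact Hk0.
  apply (Rle_lt_trans _ (Cmod (f s))); [| exact Hs].
  pose proof (Cmod_ge_0 (f s)).
  assert (/ Cmod (k s) <= 1)%R by (rewrite <- Rinv_1; apply Rinv_le_contravar; lra).
  nra.
Qed.

Definition hankel_base (t : C) : C := / 2 * (t - / t) + 1.

Lemma Re_hankel_base_ge_1 (t : C) : (1 <= Re t)%R -> (1 <= Re (hankel_base t))%R.
Proof.
  destruct t as [p q]; unfold hankel_base, Re; simpl. intro Hp.
  set (N := (p * (p * 1) + q * (q * 1))%R).
  assert (HN : (1 <= N)%R) by (unfold N; nra).
  assert (Hinv : (p / N <= p)%R).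
  { apply (Rmult_le_reg_r N); [lra |]. unfold Rdiv. rewrite Rmult_assoc, Rinv_l by lra. nra. }
  apply Rle_trans with ((p - p / N) / 2 + 1)%R; [lra | right; field; lra].
Qed.

Section HankelIntegral.

Variables (gamma dgamma L1 L2 : R -> C).

Hypothesis Hder : forall s, is_derive_RC gamma s (dgamma s).
Hypothesis Hdcont : forall s, continuous dgamma s.
Hypothesis HL1 : forall s, continuous L1 s /\ cexp (L1 s) = gamma s.
Hypothesis HL2 : forall s, continuous L2 s /\ cexp (L2 s) = hankel_base (gamma s).
Hypothesis Hint :
  forall a b : C, (Re b < Re a)%R -> ex_cint (hankel_integrand dgamma L1 L2 a b).

Local Notation hi := (hankel_integrand dgamma L1 L2).
Local Notation y := (hankel_y dgamma L1 L2).

Lemma gamma_neq0 (s : R) : gamma s <> 0.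
Proof. rewrite <- (proj2 (HL1 s)). apply cexp_neq0. Qed.

Lemma hankel_integrand_shift (a b : C) (s : R) :
  hi a b s = hi a (b - 1) s + / 2 * (hi (a - 1) (b - 1) s - hi (a + 1) (b - 1) s).
Proof.
  unfold hankel_integrand.
  rewrite (cexp_mult_split b (b - 1) 1), (cexp_mult_split (- (a - 1) - 1) (- a - 1) 1),
    (cexp_mult_split (- (a + 1) - 1) (- a - 1) (-1)) by ring.
  rewrite !cexp_mult_1, cexp_mult_m1, (proj2 (HL1 s)), (proj2 (HL2 s)).
  unfold hankel_base. field. apply gamma_neq0.
Qed.

Lemma is_derive_L1 (s : R) : is_derive_RC L1 s (dgamma s / gamma s).
Proof. apply is_derive_RC_log; [apply HL1 | apply HL1 | apply Hder]. Qed.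

Lemma is_derive_L2 (s : R) :
  is_derive_RC L2 s (/ 2 * (dgamma s + dgamma s / (gamma s * gamma s)) / hankel_base (gamma s)).
Proof.
  apply (is_derive_RC_log (fun u => hankel_base (gamma u))); [apply HL2 | apply HL2 |].
  apply (is_derive_RC_ext (fun u => / 2 * (gamma u - cexp (-1 * L1 u)) + 1)).
  { intro u. now rewrite cexp_mult_m1, (proj2 (HL1 u)). }
  eapply is_derive_RC_eq.
  - apply is_derive_RC_plus; [| apply is_derive_RC_const].
    apply is_derive_RC_scal, is_derive_RC_minus; [apply Hder |].
    apply is_derive_RC_cexp, is_derive_RC_scal, is_derive_L1.
  - cbv beta. rewrite cexp_mult_m1, (proj2 (HL1 s)). field. apply gamma_neq0.
Qed.

Lemma continuous_cexp_L1 (c : C) (s : R) : continuous (fun u => cexp (c * L1 u)) s.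
Proof.
  eapply is_derive_RC_continuous, is_derive_RC_cexp, is_derive_RC_scal, is_derive_L1.
Qed.

Lemma continuous_cexp_L2 (c : C) (s : R) : continuous (fun u => cexp (c * L2 u)) s.
Proof.
  eapply is_derive_RC_continuous, is_derive_RC_cexp, is_derive_RC_scal, is_derive_L2.
Qed.

Lemma continuous_hankel_integrand (a b : C) (s : R) : continuous (hi a b) s.
Proof.
  apply continuous_Cmult; [apply continuous_Cmult |].
  - apply continuous_cexp_L1.
  - apply continuous_cexp_L2.
  - apply Hdcont.
Qed.

Lemma is_derive_hankel_primitive (a b : C) (s : R) :
  is_derive_RC (fun u => cexp (- a * L1 u) * cexp (b * L2 u)) s
    (- a * hi a b s + b / 2 * (hi (a - 1) (b - 1) s + hi (a + 1) (b - 1) s)).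
Proof.
  eapply is_derive_RC_eq.
  { apply is_derive_RC_mult; apply is_derive_RC_cexp, is_derive_RC_scal;
      [apply is_derive_L1 | apply is_derive_L2]. }
  unfold hankel_integrand.
  rewrite (cexp_mult_split (b - 1) b (-1)), (cexp_mult_split (- (a + 1) - 1) (- a - 1) (-1)),
    (cexp_mult_split (- a - 1) (- a) (-1)) by ring.
  replace (- (a - 1) - 1) with (- a) by ring.
  rewrite !cexp_mult_m1, (proj2 (HL1 s)), <- (proj2 (HL2 s)).
  field. split; [apply cexp_neq0 | apply gamma_neq0].
Qed.

Lemma hankel_y_shift (a b : C) : (Re b < Re a)%R ->
  y a b = y a (b - 1) + / 2 * (y (a - 1) (b - 1) - y (a + 1) (b - 1)).
Proof.
  intro Hab. unfold hankel_y.
  apply (is_cint_unique (hi a b)); [apply cint_correct, Hint, Hab |].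
  apply (is_cint_ext
           (fun s => hi a (b - 1) s + / 2 * (hi (a - 1) (b - 1) s - hi (a + 1) (b - 1) s))).
  { intro s. symmetry. apply hankel_integrand_shift. }
  apply is_cint_plus; [| apply is_cint_scal, is_cint_minus];
    apply cint_correct, Hint; unfold Re in *; simpl in *; lra.
Qed.

Lemma hankel_y_ibp (a b : C) : (Re b < Re a)%R ->
  filterlim (fun s => cexp (- a * L1 s) * cexp (b * L2 s))
    (Rbar_locally m_infty) (locally (RtoC 0)) ->
  filterlim (fun s => cexp (- a * L1 s) * cexp (b * L2 s))
    (Rbar_locally p_infty) (locally (RtoC 0)) ->
  a * y a b = b / 2 * (y (a - 1) (b - 1) + y (a + 1) (b - 1)).
Proof.
  intros Hab Hm Hp. unfold hankel_y.
  set (D := fun s => - a * hi a b s + b / 2 * (hi (a - 1) (b - 1) s + hi (a + 1) (b - 1) s)).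
  assert (H0 : is_cint D 0).
  { apply (is_cint_derive_vanishing (fun s => cexp (- a * L1 s) * cexp (b * L2 s)) D); auto.
    - intro s. apply is_derive_hankel_primitive.
    - intro s. unfold D.
      apply continuous_Cplus; apply continuous_Cmult; try apply continuous_const;
        try apply continuous_Cplus; apply continuous_hankel_integrand. }
  assert (HD : is_cint D (- a * cint (hi a b)
                          + b / 2 * (cint (hi (a - 1) (b - 1)) + cint (hi (a + 1) (b - 1))))).
  { apply is_cint_plus; [| apply is_cint_scal, is_cint_plus]; try apply is_cint_scal;
      apply cint_correct, Hint; unfold Re in *; simpl in *; lra. }
  assert (E := is_cint_unique _ _ _ HD H0).
  rewrite <- (Cplus_0_r (a * cint (hi a b))), <- E. ring.
Qed.

Lemma hankel_y_delay_difference (a b : C) : (Re b < Re a)%R ->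
  filterlim (fun s => cexp (- a * L1 s) * cexp (b * L2 s))
    (Rbar_locally m_infty) (locally (RtoC 0)) ->
  filterlim (fun s => cexp (- a * L1 s) * cexp (b * L2 s))
    (Rbar_locally p_infty) (locally (RtoC 0)) ->
  b * fwd_diff (y a) (b - 1) + a * y a b - b * y (a - 1) (b - 1) = 0 /\
  b * fwd_diff (y a) (b - 1) - a * y a b + b * y (a + 1) (b - 1) = 0.
Proof.
  intros Hab Hm Hp. unfold fwd_diff. replace (b - 1 + 1) with b by ring.
  rewrite (hankel_y_ibp a b Hab Hm Hp), (hankel_y_shift a b Hab). split; field.
Qed.

Lemma hankel_vanishing_shift (F : (R -> Prop) -> Prop) {FF : Filter F} (a b : C) :
  filterlim (fun s => Re (gamma s)) F (Rbar_locally p_infty) ->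
  filterlim (fun s => cexp (- a * L1 s) * cexp (b * L2 s)) F (locally (RtoC 0)) ->
  filterlim (fun s => cexp (- a * L1 s) * cexp ((b - 1) * L2 s)) F (locally (RtoC 0)) /\
  filterlim (fun s => cexp (- (a + 1) * L1 s) * cexp ((b - 1) * L2 s)) F (locally (RtoC 0)).
Proof.
  intros Hg Hv.
  assert (Hre : F (fun s => 1 <= Re (gamma s))%R) by (apply Hg; exists 1%R; intros; lra).
  assert (Hw : filterlim
                 (fun s => cexp (- a * L1 s) * cexp (b * L2 s) * / hankel_base (gamma s))
                 F (locally (RtoC 0))).
  { apply (filterlim_mult_inv_0 F _ _ Hv).
    revert Hre; apply filter_imp; intros s; apply Re_hankel_base_ge_1. }
  assert (Hw0 : forall s, hankel_base (gamma s) <> 0)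
    by (intro s; rewrite <- (proj2 (HL2 s)); apply cexp_neq0).
  split.
  - refine (filterlim_ext _ _ _ Hw). intro s.
    rewrite (cexp_mult_split b (b - 1) 1), cexp_mult_1, (proj2 (HL2 s)) by ring.
    field. apply Hw0.
  - refine (filterlim_ext _ _ _ (filterlim_mult_inv_0 F _ gamma Hw Hre)). intro s.
    rewrite (cexp_mult_split b (b - 1) 1), (cexp_mult_split (- (a + 1)) (- a) (-1)) by ring.
    rewrite cexp_mult_1, cexp_mult_m1, (proj2 (HL1 s)), (proj2 (HL2 s)).
    field. split; [apply gamma_neq0 | apply Hw0].
Qed.

End HankelIntegral.

Lemma Ceq0_lincomb3 (g e1 e2 e3 c1 c2 c3 : C) :
  e1 = 0 -> e2 = 0 -> e3 = 0 -> g = c1 * e1 + c2 * e2 + c3 * e3 -> g = 0.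
Proof. intros -> -> -> ->. ring. Qed.

Lemma bessel_of_delay_difference (y : C -> C -> C) (nu x : C) :
  x * fwd_diff (y nu) (x - 1) - nu * y nu x + x * y (nu + 1) (x - 1) = 0 ->
  (x - 1) * fwd_diff (y nu) (x - 1 - 1) - nu * y nu (x - 1)
    + (x - 1) * y (nu + 1) (x - 1 - 1) = 0 ->
  (x - 1) * fwd_diff (y (nu + 1)) (x - 1 - 1) + (nu + 1) * y (nu + 1) (x - 1)
    - (x - 1) * y (nu + 1 - 1) (x - 1 - 1) = 0 ->
  x * (x - 1) * fwd_diff (fwd_diff (y nu)) (x - 2) + x * fwd_diff (y nu) (x - 1)
    + x * (x - 1) * y nu (x - 2) - nu * nu * y nu x = 0.
Proof.
  intros E1 E2 E3.
  apply (Ceq0_lincomb3 _ _ _ _ (x + nu) (- x) (- x) E1 E2 E3).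
  unfold fwd_diff.
  replace (x - 2 + 1 + 1) with x by ring. replace (x - 1 - 1 + 1) with (x - 1) by ring.
  replace (x - 2 + 1) with (x - 1) by ring. replace (x - 1 + 1) with x by ring.
  replace (x - 1 - 1) with (x - 2) by ring. replace (nu + 1 - 1) with nu by ring.
  ring.
Qed.

Theorem mainTheorem7 (gamma dgamma L1 L2 : R -> C) (nu x : C)
  (* U is a C^1 path *)
  (Hder : forall s, is_derive (fun u => Re (gamma u)) s (Re (dgamma s)) /\
                    is_derive (fun u => Im (gamma u)) s (Im (dgamma s)))
  (Hdcont : forall s, continuous dgamma s)
  (* continuous branches of log t and log [(1/2)(t - 1/t) + 1] along U *)
  (HL1 : forall s, continuous L1 s /\ cexp (L1 s) = gamma s)
  (HL2 : forall s, continuous L2 s /\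
                   cexp (L2 s) = / 2 * (gamma s - / gamma s) + 1)
  (* Hankel shape: both ends go to +infinity, U starts above the real axis,
     ends below it, and circles the origin once counterclockwise *)
  (Hinf : filterlim (fun s => Re (gamma s)) (Rbar_locally m_infty) (Rbar_locally p_infty) /\
          filterlim (fun s => Re (gamma s)) (Rbar_locally p_infty) (Rbar_locally p_infty))
  (Hshape : exists M : R, forall s : R, (M <= s)%R ->
              (0 < Im (gamma (- s)))%R /\ (Im (gamma s) < 0)%R /\
              (0 < Im (L1 s) - Im (L1 (- s)) < 2 * PI)%R)
  (Hx : (Re x < Re nu)%R)
  (* t^{-nu} [(1/2)(t - 1/t) + 1]^x vanishes at the endpoints of U *)
  (Hvan : filterlim (fun s => cexp (- nu * L1 s) * cexp (x * L2 s))
            (Rbar_locally m_infty) (locally (RtoC 0)) /\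
          filterlim (fun s => cexp (- nu * L1 s) * cexp (x * L2 s))
            (Rbar_locally p_infty) (locally (RtoC 0)))
  (* the defining contour integrals converge (for Re x' < Re nu') *)
  (Hint : forall nu' x' : C, (Re x' < Re nu')%R ->
            ex_cint (hankel_integrand dgamma L1 L2 nu' x')) :
  let y := hankel_y dgamma L1 L2 in
  (x * fwd_diff (y nu) (x - 1) + nu * y nu x - x * y (nu - 1) (x - 1) = 0 /\
   x * fwd_diff (y nu) (x - 1) - nu * y nu x + x * y (nu + 1) (x - 1) = 0) /\
  x * (x - 1) * fwd_diff (fwd_diff (y nu)) (x - 2) + x * fwd_diff (y nu) (x - 1)
    + x * (x - 1) * y nu (x - 2) - nu * nu * y nu x = 0.
Proof.
  intro y.
  destruct Hinf as [Hm Hp], Hvan as [Vm Vp].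
  destruct (hankel_vanishing_shift gamma L1 L2 HL1 HL2 _ nu x Hm Vm) as [Vm1 Vm2].
  destruct (hankel_vanishing_shift gamma L1 L2 HL1 HL2 _ nu x Hp Vp) as [Vp1 Vp2].
  assert (Hx1 : (Re (x - 1) < Re nu)%R) by (unfold Re in *; simpl; lra).
  assert (Hx2 : (Re (x - 1) < Re (nu + 1))%R) by (unfold Re in *; simpl; lra).
  assert (DD := hankel_y_delay_difference gamma dgamma L1 L2 Hder Hdcont HL1 HL2 Hint).
  assert (D0 := DD nu x Hx Vm Vp).
  assert (D1 := DD nu (x - 1) Hx1 Vm1 Vp1).
  assert (D2 := DD (nu + 1) (x - 1) Hx2 Vm2 Vp2).
  split; [exact D0 |].
  apply bessel_of_delay_difference; [apply D0 | apply D1 | apply D2].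
Qed.
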